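(* Let $0<|b_0|<\frac{2}{3\sqrt3}$ and $p(x,\xi)=\xi_0^3-(\xi_1^2+x_1^2\xi_n^2)\xi_0-b_0x_1^3\xi_n^3$ on $T^*\mathbb{R}^{n+1}$, and let $\Sigma_3=\{x_1=\xi_0=\xi_1=0\}$ (near points with $\xi_n\neq0$). For every $z\in\Sigma_3$ with $\xi_n\ne0$, the propagation cone $C_z$ contains a nonzero vector of $T_z\Sigma_3$, and $C_z$ is not contained in $T_z\Sigma_3$. In particular, $C_z$ is not transversal to $\Sigma_3$.
   Context: For a point $z$ where $p$ vanishes to order exactly $3$, the localization $p_z(X)$ is the lowest (third) order term of the Taylor expansion of $p$ at $z$, a polynomial on $T_z(T^*\mathbb{R}^{n+1})$. Since $p$ is hyperbolic with respect to $\xi_0$, the hyperbolicity cone $\Gamma_z$ is the connected component containing $N=(0;1,0,\dots,0)$ (i.e. $\delta\xi_0=1$, all other components $0$) of $\{X\in T_z(T^*\mathbb{R}^{n+1}):p_z(X)\ne0\}$. The propagation cone is $C_z=\{X\in T_z(T^*\mathbb{R}^{n+1}):\sigma(X,Y)\le0\ \forall Y\in\Gamma_z\}$, where $\sigma$ is the canonical symplectic form on $T^*\mathbb{R}^{n+1}$. $p$ vanishes exactly to order $3$ on $\Sigma_3$ under the assumption on $b_0$. *)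

From mathcomp Require Import ssreflect ssrfun ssrbool eqtype ssrnat seq fintype bigop.
From Stdlib Require Import Reals.
Open Scope R_scope.

(* Coordinates (x_0..x_n ; xi_0..xi_n) of T^*R^{n+1}; also used for tangent
   vectors (dx ; dxi) of T_z(T^*R^{n+1}) ~ R^{2n+2}. *)
Definition vec (n : nat) := ('I_(n.+1) -> R).
Definition pt (n : nat) := (vec n * vec n)%type.

Definition vadd {n} (X Y : pt n) : pt n :=
  (fun i => fst X i + fst Y i, fun i => snd X i + snd Y i).
Definition vscale {n} (t : R) (X : pt n) : pt n :=
  (fun i => t * fst X i, fun i => t * snd X i).

Definition rsum {n} (f : 'I_(n.+1) -> R) : R := \big[Rplus/0]_(i < n.+1) f i.

Definition sympl {n} (X Y : pt n) : R :=
  rsum (fun j => snd X j * fst Y j - fst X j * snd Y j).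

Definition dist2 {n} (X Y : pt n) : R :=
  rsum (fun j => (fst X j - fst Y j) ^ 2 + (snd X j - snd Y j) ^ 2).
Definition is_open {n} (U : pt n -> Prop) : Prop :=
  forall X, U X -> exists r, 0 < r /\ forall Y, dist2 X Y < r * r -> U Y.
Definition connected_set {n} (S : pt n -> Prop) : Prop :=
  forall U V : pt n -> Prop, is_open U -> is_open V ->
    (forall X, S X -> U X \/ V X) ->
    (forall X, S X -> U X -> V X -> False) ->
    (exists X, S X /\ U X) -> (exists X, S X /\ V X) -> False.
Definition conn_component {n} (A : pt n -> Prop) (N : pt n) (X : pt n) : Prop :=
  exists S, connected_set S /\ (forall Y, S Y -> A Y) /\ S N /\ S X.

Definition i0 {n} : 'I_(n.+1) := ord0.
Definition i1 {n} : 'I_(n.+1) := inord 1.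
Definition iN {n} : 'I_(n.+1) := ord_max.

Definition ppoly {n} (b0 : R) (z : pt n) : R :=
  let x := fst z in let xi := snd z in
  xi i0 ^ 3 - (xi i1 ^ 2 + x i1 ^ 2 * xi iN ^ 2) * xi i0
  - b0 * x i1 ^ 3 * xi iN ^ 3.

(* q is the localization of order m of p at z: the lowest-order (m-th) term of
   the Taylor expansion, i.e. t^{-m} p(z + tX) -> q(X) as t -> 0. *)
Definition is_localization {n} (p : pt n -> R) (m : nat) (z : pt n)
  (q : pt n -> R) : Prop :=
  forall X : pt n,
    limit1_in (fun t => p (vadd z (vscale t X)) / t ^ m) (fun t => t <> 0) (q X) 0.

Definition Nvec {n} : pt n := (fun _ => 0, fun i => if i == ord0 then 1 else 0).

Definition hyp_cone {n} (q : pt n -> R) : pt n -> Prop :=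
  conn_component (fun X => q X <> 0) Nvec.

Definition prop_cone {n} (q : pt n -> R) (X : pt n) : Prop :=
  forall Y, hyp_cone q Y -> sympl X Y <= 0.

Definition in_Sigma3 {n} (z : pt n) : Prop :=
  fst z i1 = 0 /\ snd z i0 = 0 /\ snd z i1 = 0.
(* T_z Sigma_3 = {dx_1 = dxi_0 = dxi_1 = 0} (Sigma_3 is a linear subspace) *)
Definition in_TSigma3 {n} (z : pt n) (X : pt n) : Prop :=
  fst X i1 = 0 /\ snd X i0 = 0 /\ snd X i1 = 0.

Definition nonzero_vec {n} (X : pt n) : Prop := exists i, fst X i <> 0 \/ snd X i <> 0.

(* Write X = (x; xi) for a tangent vector at z and c = xi_n(z).  The localization is
   q(X) = xi_0^3 - (xi_1^2 + c^2 x_1^2) xi_0 - b0 c^3 x_1^3.  On the critical cone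
   3 xi_0^2 = xi_1^2 + c^2 x_1^2, xi_0 >= 0, one gets q = -2 xi_0^3 - b0 (c x_1)^3 <= 0,
   because |c x_1| <= sqrt 3 xi_0 and |b0| < 2 / (3 sqrt 3).  Hence the open set
   {q > 0, xi_0 > 0, 3 xi_0^2 > xi_1^2 + c^2 x_1^2} is closed in {q <> 0}, so it contains
   the component Gamma_z of N.  For Y in Gamma_z and X = d/dx_0 + k d/dx_1 we get
   sigma(X, Y) = -xi_0 - k xi_1 <= 0 as soon as 3 k^2 <= 1: k = 0 gives a vector of
   T_z Sigma_3 in C_z, and k = 1/2 a vector of C_z outside T_z Sigma_3. *)
From HB Require Import structures.
From mathcomp Require Import ssreflect ssrfun ssrbool eqtype ssrnat seq fintype bigop.
From Stdlib Require Import Reals Lra Psatz Classical FunctionalExtensionality.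
Open Scope R_scope.

HB.instance Definition _ := Monoid.isComLaw.Build R 0 Rplus
  (fun x y z => esym (Rplus_assoc x y z)) Rplus_comm Rplus_0_l.

Lemma rsum_ge_term {n} (f : 'I_(n.+1) -> R) j :
  (forall i, 0 <= f i) -> f j <= rsum f.
Proof.
move=> f_ge0; rewrite /rsum (bigD1 j) //= -{1}(Rplus_0_r (f j)).
apply: Rplus_le_compat_l.
by apply: (@big_ind R (fun x => 0 <= x)) => [|x y|i _]; [lra | lra | apply: f_ge0].
Qed.

Lemma dist2_ge_coord {n} (X Y : pt n) j :
  (fst X j - fst Y j) ^ 2 + (snd X j - snd Y j) ^ 2 <= dist2 X Y.
Proof. by apply: rsum_ge_term => i; apply: Rplus_le_le_0_compat; apply: pow2_ge_0. Qed.

Lemma lt_Rmin_sq r1 r2 d : 0 < r1 -> 0 < r2 ->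
  d < Rmin r1 r2 * Rmin r1 r2 -> d < r1 * r1 /\ d < r2 * r2.
Proof.
move=> r1_gt0 r2_gt0 d_lt.
have := Rmin_l r1 r2; have := Rmin_r r1 r2; have := Rmin_glb_lt _ _ _ r1_gt0 r2_gt0.
move=> *; split; nra.
Qed.

Definition pt_continuous {n} (f : pt n -> R) : Prop :=
  forall X eps, 0 < eps ->
  exists r, 0 < r /\ forall Y, dist2 X Y < r * r -> Rabs (f Y - f X) < eps.

Section Continuity.
Context {n : nat}.
Implicit Types f g : pt n -> R.

Lemma pt_continuous_of_sq_le f :
  (forall X Y, (f Y - f X) ^ 2 <= dist2 X Y) -> pt_continuous f.
Proof.
move=> f_lip X eps eps_gt0; exists eps; split=> // Y XY_lt.
have := f_lip X Y; rewrite -(pow2_abs (f Y - f X)).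
have := Rabs_pos (f Y - f X); nra.
Qed.

Lemma pt_continuous_fst j : pt_continuous (fun Y : pt n => fst Y j).
Proof.
apply: pt_continuous_of_sq_le => X Y; have := dist2_ge_coord X Y j.
have := pow2_ge_0 (snd X j - snd Y j); nra.
Qed.

Lemma pt_continuous_snd j : pt_continuous (fun Y : pt n => snd Y j).
Proof.
apply: pt_continuous_of_sq_le => X Y; have := dist2_ge_coord X Y j.
have := pow2_ge_0 (fst X j - fst Y j); nra.
Qed.

Lemma pt_continuous_const a : pt_continuous (fun _ : pt n => a).
Proof. by move=> X eps eps_gt0; exists 1; split=> [|Y _]; rewrite ?Rminus_diag ?Rabs_R0; lra. Qed.

Lemma pt_continuous_add f g :
  pt_continuous f -> pt_continuous g -> pt_continuous (fun Y => f Y + g Y).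
Proof.
move=> f_cont g_cont X eps eps_gt0.
have [r1 [r1_gt0 f_near]] := f_cont X (eps / 2) ltac:(lra).
have [r2 [r2_gt0 g_near]] := g_cont X (eps / 2) ltac:(lra).
exists (Rmin r1 r2); split=> [|Y XY_lt]; first exact: Rmin_glb_lt.
have [XY_lt1 XY_lt2] := lt_Rmin_sq _ _ _ r1_gt0 r2_gt0 XY_lt.
have := f_near Y XY_lt1; have := g_near Y XY_lt2.
have := Rabs_triang (f Y - f X) (g Y - g X).
by rewrite (_ : f Y - f X + (g Y - g X) = f Y + g Y - (f X + g X)); [lra | ring].
Qed.

Lemma pt_continuous_mul f g :
  pt_continuous f -> pt_continuous g -> pt_continuous (fun Y => f Y * g Y).
Proof.
move=> f_cont g_cont X eps eps_gt0.
pose M := Rabs (f X) + Rabs (g X) + 1.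
have M_gt0 : 0 < M by have := Rabs_pos (f X); have := Rabs_pos (g X); rewrite /M; lra.
pose d := Rmin 1 (eps / M).
have d_gt0 : 0 < d by apply: Rmin_glb_lt; [lra | apply: Rdiv_lt_0_compat].
have Md_le : M * d <= eps.
  have : M * (eps / M) = eps by field; lra.
  have := Rmin_r 1 (eps / M); rewrite -/d; nra.
have [r1 [r1_gt0 f_near]] := f_cont X d d_gt0.
have [r2 [r2_gt0 g_near]] := g_cont X d d_gt0.
exists (Rmin r1 r2); split=> [|Y XY_lt]; first exact: Rmin_glb_lt.
have [XY_lt1 XY_lt2] := lt_Rmin_sq _ _ _ r1_gt0 r2_gt0 XY_lt.
have df := f_near Y XY_lt1; have dg := g_near Y XY_lt2.
have d_le1 : d <= 1 := Rmin_l _ _.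
rewrite (_ : f Y * g Y - f X * g X =
  f X * (g Y - g X) + g X * (f Y - f X) + (f Y - f X) * (g Y - g X)); last ring.
have := Rabs_triang (f X * (g Y - g X) + g X * (f Y - f X)) ((f Y - f X) * (g Y - g X)).
have := Rabs_triang (f X * (g Y - g X)) (g X * (f Y - f X)).
rewrite !Rabs_mult.
have := Rabs_pos (f X); have := Rabs_pos (g X).
have := Rabs_pos (f Y - f X); have := Rabs_pos (g Y - g X).
rewrite /M in Md_le; nra.
Qed.

Lemma pt_continuous_pow f k : pt_continuous f -> pt_continuous (fun Y => f Y ^ k).
Proof.
move=> f_cont; elim: k => [|k IHk] /=; first exact: pt_continuous_const.
exact: pt_continuous_mul.
Qed.

Lemma pt_continuous_opp f : pt_continuous f -> pt_continuous (fun Y => - f Y).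
Proof.
move=> f_cont X eps /(f_cont X) [r [r_gt0 f_near]]; exists r; split=> // Y /f_near.
by rewrite (_ : - f Y - - f X = - (f Y - f X)); [rewrite Rabs_Ropp | ring].
Qed.

Lemma pt_continuous_sub f g :
  pt_continuous f -> pt_continuous g -> pt_continuous (fun Y => f Y - g Y).
Proof. by move=> f_cont g_cont; apply: pt_continuous_add => //; apply: pt_continuous_opp. Qed.

Lemma is_open_pos f : pt_continuous f -> is_open (fun Y => 0 < f Y).
Proof.
move=> f_cont X fX_gt0; have [r [r_gt0 f_near]] := f_cont X (f X) fX_gt0.
by exists r; split=> // Y /f_near /Rabs_def2; lra.
Qed.

End Continuity.

Ltac pt_continuity := repeat first
  [ apply: pt_continuous_sub | apply: pt_continuous_add | apply: pt_continuous_mul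
  | apply: pt_continuous_pow | apply: pt_continuous_opp | apply: pt_continuous_fst
  | apply: pt_continuous_snd | apply: pt_continuous_const ].

Section OpenSets.
Context {n : nat}.
Implicit Types U V A : pt n -> Prop.

Lemma is_open_and U V : is_open U -> is_open V -> is_open (fun Y => U Y /\ V Y).
Proof.
move=> U_open V_open X [UX VX].
have [r1 [r1_gt0 U_near]] := U_open X UX; have [r2 [r2_gt0 V_near]] := V_open X VX.
exists (Rmin r1 r2); split=> [|Y XY_lt]; first exact: Rmin_glb_lt.
by have [? ?] := lt_Rmin_sq _ _ _ r1_gt0 r2_gt0 XY_lt; split; auto.
Qed.

Lemma is_open_or U V : is_open U -> is_open V -> is_open (fun Y => U Y \/ V Y).
Proof.
move=> U_open V_open X [/U_open | /V_open] [r [r_gt0 near]];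
  by exists r; split=> // Y /near; tauto.
Qed.

Lemma conn_component_sub U V A N X :
  is_open U -> is_open V -> (forall Y, A Y -> U Y \/ V Y) ->
  (forall Y, A Y -> U Y -> V Y -> False) ->
  U N -> conn_component A N X -> U X.
Proof.
move=> U_open V_open A_cover UV_disj UN [S [S_conn [SA [SN SX]]]].
apply: NNPP => not_UX; apply: (S_conn U V) => //.
- by move=> Y /SA; apply: A_cover.
- by move=> Y /SA; apply: UV_disj.
- by exists N.
- by exists X; split=> //; case: (A_cover X (SA X SX)).
Qed.

End OpenSets.

Definition ppoly_loc {n} (b0 c : R) (X : pt n) : R :=
  snd X i0 ^ 3 - (snd X i1 ^ 2 + fst X i1 ^ 2 * c ^ 2) * snd X i0
  - b0 * fst X i1 ^ 3 * c ^ 3.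

Lemma is_localization_ppoly {n} (b0 : R) (z : pt n) :
  in_Sigma3 z -> is_localization (ppoly b0) 3 z (ppoly_loc b0 (snd z iN)).
Proof.
move=> [z_x1 [z_xi0 z_xi1]] X.
pose c := snd z iN.
pose g t := snd X i0 ^ 3 - (snd X i1 ^ 2 + fst X i1 ^ 2 * (c + t * snd X iN) ^ 2) * snd X i0
  - b0 * fst X i1 ^ 3 * (c + t * snd X iN) ^ 3.
have quotient_g t : t <> 0 -> ppoly b0 (vadd z (vscale t X)) / t ^ 3 = g t.
  by move=> t_neq0; rewrite /ppoly /vadd /vscale /g /c /= z_x1 z_xi0 z_xi1; field.
have g_cont : continuity_pt g 0 by rewrite /g; reg.
have g0 : g 0 = ppoly_loc b0 c X by rewrite /g /ppoly_loc; ring.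
move: g_cont; rewrite /continuity_pt /continue_in /limit1_in /limit_in => g_cont.
move=> eps eps_gt0; have [r [r_gt0 g_near]] := g_cont eps eps_gt0.
exists r; split=> // t [t_neq0 t_near].
by rewrite quotient_g // -g0; apply: g_near; split=> //; split; auto.
Qed.

Lemma is_localization_unique {n} (p : pt n -> R) m z q q' :
  is_localization p m z q -> is_localization p m z q' -> q = q'.
Proof.
move=> p_q p_q'; apply: functional_extensionality => X.
apply: (single_limit _ _ _ _ _ _ (p_q X) (p_q' X)) => r r_gt0.
exists (r / 2); split; first lra.
by rewrite /R_dist Rminus_0_r Rabs_pos_eq; lra.
Qed.

Lemma Rabs_mul_cube_le (b0 a w : R) : Rabs b0 < 2 / (3 * sqrt 3) -> 0 <= a ->
  w ^ 2 <= 3 * a ^ 2 -> Rabs (b0 * w ^ 3) <= 2 * a ^ 3.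
Proof.
move=> b0_small a_ge0 w_le.
have s_gt0 : 0 < sqrt 3 by apply: sqrt_lt_R0; lra.
have s_sq : sqrt 3 * sqrt 3 = 3 by apply: sqrt_sqrt; lra.
have w_abs : Rabs w <= sqrt 3 * a.
  apply: Rsqr_incr_0_var; last nra.
  by rewrite /Rsqr; have := pow2_abs w; nra.
have w_cube : Rabs w ^ 3 <= 3 * sqrt 3 * a ^ 3.
  rewrite (_ : 3 * sqrt 3 * a ^ 3 = (sqrt 3 * a) ^ 3); last by rewrite -{1}s_sq; ring.
  by apply: pow_incr; split; [apply: Rabs_pos | exact: w_abs].
have b0_s : Rabs b0 * (3 * sqrt 3) < 2.
  have bound_s : 2 / (3 * sqrt 3) * (3 * sqrt 3) = 2 by field; lra.
  rewrite -bound_s; apply: Rmult_lt_compat_r => //; lra.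
rewrite Rabs_mult -RPow_abs.
have := Rabs_pos b0; have := pow_le a 3 a_ge0; nra.
Qed.

Lemma ppoly_loc_le0 {n} (b0 c : R) (X : pt n) : Rabs b0 < 2 / (3 * sqrt 3) ->
  0 <= snd X i0 -> 3 * snd X i0 ^ 2 = snd X i1 ^ 2 + fst X i1 ^ 2 * c ^ 2 ->
  ppoly_loc b0 c X <= 0.
Proof.
move=> b0_small a_ge0 critical.
have := Rabs_mul_cube_le b0 (snd X i0) (fst X i1 * c) b0_small a_ge0.
have := Rle_abs (- (b0 * (fst X i1 * c) ^ 3)); rewrite Rabs_Ropp.
have := pow2_ge_0 (snd X i1).
rewrite /ppoly_loc (_ : b0 * fst X i1 ^ 3 * c ^ 3 = b0 * (fst X i1 * c) ^ 3); last ring.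
rewrite -critical; nra.
Qed.

Lemma i1_neq_i0 {n} : (1 <= n)%nat -> (@i1 n) != i0.
Proof. by move=> n_ge1; apply/eqP => /(congr1 val) /=; rewrite inordK. Qed.

Section HyperbolicityCone.
Variables (n : nat) (b0 c : R).
Hypotheses (n_ge1 : (1 <= n)%nat) (b0_small : Rabs b0 < 2 / (3 * sqrt 3)).

Lemma hyp_cone_ppoly_loc (Y : pt n) : hyp_cone (ppoly_loc b0 c) Y ->
  0 < snd Y i0 /\ snd Y i1 ^ 2 + fst Y i1 ^ 2 * c ^ 2 < 3 * snd Y i0 ^ 2.
Proof.
pose q := @ppoly_loc n b0 c.
pose s (X : pt n) := snd X i1 ^ 2 + fst X i1 ^ 2 * c ^ 2.
pose U X := 0 < q X /\ 0 < snd X i0 /\ 0 < 3 * snd X i0 ^ 2 - s X.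
pose V X := (0 < - q X \/ 0 < - snd X i0) \/ 0 < s X - 3 * snd X i0 ^ 2.
have U_open : is_open U.
  by apply: is_open_and; [|apply: is_open_and]; apply: is_open_pos; rewrite /q /s /ppoly_loc; pt_continuity.
have V_open : is_open V.
  by apply: is_open_or; [apply: is_open_or|]; apply: is_open_pos; rewrite /q /s /ppoly_loc; pt_continuity.
have s_ge0 X : 0 <= s X.
  by have := pow2_ge_0 (snd X i1); have := pow2_ge_0 (fst X i1 * c); rewrite /s; nra.
have cover X : q X <> 0 -> U X \/ V X.
  move=> qX_neq0; rewrite /U /V; have := s_ge0 X.
  case: (Rtotal_order (q X) 0) => [|[//|qX_gt0]]; first lra.
  case: (Rlt_or_le (snd X i0) 0) => [|a_ge0]; first lra.
  case: (Rtotal_order (3 * snd X i0 ^ 2 - s X) 0) => [|[critical|d_gt0]]; first lra.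
  - have := ppoly_loc_le0 b0 c X b0_small a_ge0 ltac:(rewrite /s in critical; lra).
    by rewrite -/q; lra.
  - by left; split=> //; split=> //; nra.
have UN : U Nvec.
  by rewrite /U /q /s /ppoly_loc /Nvec /= (negbTE (i1_neq_i0 n_ge1)); nra.
move=> Y_cone.
have [_ [a_gt0 a_large]] : U Y.
  apply: (conn_component_sub U V _ Nvec Y U_open V_open cover) => //.
  by move=> X _; rewrite /U /V; lra.
by rewrite /s in a_large; lra.
Qed.

Definition dx01 (k : R) : pt n :=
  (fun i => if i == i0 then 1 else if i == i1 then k else 0, fun _ => 0).

Lemma sympl_dx01 k (Y : pt n) : sympl (dx01 k) Y = - snd Y i0 - k * snd Y i1.
Proof.
have i10 := i1_neq_i0 n_ge1.
rewrite /sympl /rsum (bigD1 i0) // (bigD1 i1) //= big1 /=.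
  by rewrite (negbTE i10) ?eqxx; ring.
by move=> i /andP [i_neq1 i_neq0]; rewrite (negbTE i_neq1) (negbTE i_neq0); ring.
Qed.

Lemma prop_cone_dx01 k : 3 * k ^ 2 <= 1 -> prop_cone (ppoly_loc b0 c) (dx01 k).
Proof.
move=> k_small Y /hyp_cone_ppoly_loc [a_gt0 a_large]; rewrite sympl_dx01.
have := pow2_ge_0 (fst Y i1 * c); have := pow2_ge_0 (k * snd Y i1); nra.
Qed.

End HyperbolicityCone.

Theorem mainTheorem9 (n : nat) (b0 : R) (z : pt n) :
  (2 <= n)%nat ->
  0 < Rabs b0 < 2 / (3 * sqrt 3) ->
  in_Sigma3 z -> snd z iN <> 0 ->
  (exists q, is_localization (ppoly b0) 3 z q) /\
  (forall q, is_localization (ppoly b0) 3 z q ->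
     (exists X, nonzero_vec X /\ in_TSigma3 z X /\ prop_cone q X) /\
     (exists X, prop_cone q X /\ ~ in_TSigma3 z X)).
Proof.
move=> n_ge2 [_ b0_small] z_Sigma3 _.
have n_ge1 : (1 <= n)%nat by apply: leq_trans n_ge2.
have i10 := i1_neq_i0 n_ge1.
have loc := is_localization_ppoly b0 z z_Sigma3.
split; first by exists (ppoly_loc b0 (snd z iN)).
move=> q /(is_localization_unique _ _ _ _ _ loc) <-.
split.
- exists (dx01 n 0); split; [|split].
  + by exists i0; left; rewrite /dx01 /= ?eqxx; lra.
  + by rewrite /in_TSigma3 /dx01 /= (negbTE i10) ?eqxx.
  + by apply: prop_cone_dx01 => //; lra.
- exists (dx01 n (1 / 2)); split.
  + by apply: prop_cone_dx01 => //; lra.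
  + by rewrite /in_TSigma3 /dx01 /= (negbTE i10) ?eqxx => [[]]; lra.
Qed.
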